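(* Let $e>0$, $\beta>0$, $v>0$ and a sign $s\in\{+1,-1\}$. Define the winding-gauge configuration $\phi_w(\tau)=2v\,t_1\exp\!\big(s\tfrac{4\pi i}{\beta}t_3\tau\big)$ and $a^{w}_\mu=-s\,\delta_{\mu4}\frac{2\pi}{e\beta}t_3$, and the unitary-gauge configuration $\phi_u=2v\,t_3$, $a^u_\mu=0$. Then there exists a map $\tilde\Omega:[0,\beta]\to\mathrm{SU}(2)$, depending only on $\tau$, which is smooth except at a single point where it is discontinuous (singular), with $\tilde\Omega(0)=\tilde\Omega(\beta)$ (periodic), such that: (i) $\tilde\Omega(\tau)\phi_w(\tau)\tilde\Omega(\tau)^\dagger=\phi_u$ for all $\tau$; (ii) $\tilde\Omega a^w_\mu\tilde\Omega^\dagger+\frac ie\tilde\Omega\partial_\mu\tilde\Omega^\dagger=a^u_\mu$ at all $\tau$ away from the discontinuity; (iii) (admissibility) for every continuous $\mathfrak{su}(2)$-valued function $\delta a(\tau)$ on $[0,\beta]$ with $\delta a(0)=\delta a(\beta)$, the function $\tilde\Omega\,\delta a\,\tilde\Omega^\dagger$ is continuous on $[0,\beta]$ and takes equal values at $0$ and $\beta$. Under this gauge transformation the Polyakov loop changes from $P[a^w]=-\mathbb 1_2$ to $P[a^u]=\mathbb 1_2$.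
   Context: Gauge group SU(2), $t_a=\frac12\sigma_a$ (Pauli matrices). A gauge transformation by $\Omega$ acts as $\phi\to\Omega\phi\Omega^\dagger$, $a_\mu\to\Omega a_\mu\Omega^\dagger+\frac ie\Omega\partial_\mu\Omega^\dagger$, with $\partial_4=\partial_\tau$. For a $\tau$-independent temporal component $a_4$ proportional to $t_3$, the Polyakov loop is $P[a]=\exp\big(ie\int_0^\beta d\tau\,a_4\big)$ (no path ordering needed). *)

From HB Require Import structures.
From mathcomp Require Import all_boot all_order all_algebra.
From mathcomp Require Import complex.
From mathcomp Require Import all_classical all_reals all_analysis.
Set Implicit Arguments. Unset Strict Implicit. Unset Printing Implicit Defensive.
Import Order.TTheory GRing.Theory Num.Theory numFieldNormedType.Exports.
Local Open Scope ring_scope.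
Local Open Scope classical_set_scope.
Local Open Scope complex_scope.

Section Defs.
Variable R : realType.
Local Notation C := R[i].
Local Notation M2 := 'M[R[i]]_2.

Definition dag (A : M2) : M2 := (map_mx conjc A)^T.

Definition sigma1 : M2 := \matrix_(i < 2, j < 2) (if i != j then 1 else 0).
Definition sigma2 : M2 :=
  \matrix_(i < 2, j < 2)
    (if i == j then 0 else if i == ord0 then - 'i else 'i).
Definition sigma3 : M2 :=
  \matrix_(i < 2, j < 2)
    (if i == j then (if i == ord0 then 1 else -1) else 0).
Definition t1 : M2 := (2%:R)^-1 *: sigma1.
Definition t2 : M2 := (2%:R)^-1 *: sigma2.
Definition t3 : M2 := (2%:R)^-1 *: sigma3.

Definition is_SU2 (U : M2) : Prop := U *m dag U = 1%:M /\ \det U = 1.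

(* su(2) in the physics convention with hermitian generators t_a:
   hermitian traceless matrices (a = a^a t_a with real a^a). *)
Definition is_su2 (A : M2) : Prop := dag A = A /\ \tr A = 0.

Definition expm_partial (A : M2) (n : nat) : M2 :=
  \sum_(k < n) ((k`!)%:R^-1 : C) *: A ^+ k.
Definition expm (A : M2) : M2 :=
  \matrix_(i < 2, j < 2)
    ((limn (fun n => complex.Re (expm_partial A n i j))) +i*
     (limn (fun n => complex.Im (expm_partial A n i j)))).

Definition mx_deriv (f : R -> M2) : R -> M2 := fun t =>
  \matrix_(i < 2, j < 2)
    ((derive1 (fun s => complex.Re (f s i j)) t) +i* (derive1 (fun s => complex.Im (f s i j)) t)).

(* Euclidean time direction mu = 4 among the four indices 'I_4
   (mu = 1,2,3,4 is represented by 0,1,2,3). *)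
Definition mu4 : 'I_4 := ord_max.

(* Partial derivative d_mu of a configuration depending only on tau. *)
Definition dmu (mu : 'I_4) (f : R -> M2) : R -> M2 :=
  if mu == mu4 then mx_deriv f else fun _ => 0.

Definition mx_cont_within (D : set R) (f : R -> M2) (x : R) : Prop :=
  forall i j : 'I_2,
    (fun s => complex.Re (f s i j)) @ within D (nbhs x) --> complex.Re (f x i j) /\
    (fun s => complex.Im (f s i j)) @ within D (nbhs x) --> complex.Im (f x i j).

Definition mx_cont_on (D : set R) (f : R -> M2) : Prop :=
  forall x, D x -> mx_cont_within D f x.

Definition smooth_on (S : set R) (f : R -> M2) : Prop :=
  exists (g : R -> M2) (U : set R),
    open U /\ S `<=` U /\
    (forall (i j : 'I_2) (n : nat) (x : R), U x ->
        derivable (derive1n n (fun s => complex.Re (g s i j))) x 1 /\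
        derivable (derive1n n (fun s => complex.Im (g s i j))) x 1) /\
    (forall x, S x -> g x = f x).

Definition gauge_transform (e : R) (Om : R -> M2) (mu : 'I_4) (a : M2) (t : R)
  : M2 :=
  Om t *m a *m dag (Om t)
  + ('i / e%:C) *: (Om t *m dmu mu (fun s => dag (Om s)) t).

Definition admissible (beta : R) (Om : R -> M2) : Prop :=
  forall da : R -> M2,
    (forall t, 0 <= t <= beta -> is_su2 (da t)) ->
    mx_cont_on `[0, beta] da ->
    da 0 = da beta ->
    mx_cont_on `[0, beta] (fun t => Om t *m da t *m dag (Om t)) /\
    Om 0 *m da 0 *m dag (Om 0) = Om beta *m da beta *m dag (Om beta).

(* Polyakov loop of a tau-independent temporal component a_4:
   P[a] = exp(i e int_0^beta a_4 dtau) = exp(i e beta a_4). *)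
Definition polyakov_const (e beta : R) (a4 : M2) : M2 :=
  expm (('i * (e * beta)%:C) *: a4).

Definition phi_w (v beta s : R) (t : R) : M2 :=
  (2 * v)%:C *: (t1 *m expm (((s * (4 * pi) / beta * t)%:C * 'i) *: t3)).
Definition a_w (e beta s : R) (mu : 'I_4) : M2 :=
  if mu == mu4 then (- s * (2 * pi) / (e * beta))%:C *: t3 else 0.

Definition phi_u (v : R) : M2 := (2 * v)%:C *: t3.
Definition a_u (mu : 'I_4) : M2 := 0.

End Defs.

From HB Require Import structures.
From mathcomp Require Import all_boot all_order all_algebra.
From mathcomp Require Import complex.
From mathcomp Require Import all_classical all_reals all_analysis.
From mathcomp Require Import ring lra.
Import Order.TTheory GRing.Theory Num.Theory numFieldNormedType.Exports.
Set Implicit Arguments. Unset Strict Implicit. Unset Printing Implicit Defensive.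
Local Open Scope ring_scope.
Local Open Scope classical_set_scope.
Local Open Scope complex_scope.

(* Let k = s pi / beta and Omega(tau) = W exp(2 i k tau t3), where W is a fixed SU(2)
   matrix with W t1 W^dag = t3.  Conjugation by exp(2 i k tau t3) undoes the winding of
   phi_w, and Omega d_tau Omega^dag = -2 i k W t3 W^dag exactly cancels the constant
   background a^w_4.  Since k beta = +-pi we get Omega(beta) = -W; resetting Omega(beta)
   to W = Omega(0) makes Omega periodic with a single jump at beta, and since -1 is
   central, conjugation by Omega does not see the jump, which gives admissibility.
   The Polyakov loops follow from exp(2 i y t3) = diag(e^{iy}, e^{-iy}). *)

Section Harmonic.
Variable R : realType.

Definition harmonic (p q m : R) (s : R) : R := p * cos (m * s) + q * sin (m * s).

Lemma is_derive_harmonic (p q m x : R) :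
  is_derive x 1 (harmonic p q m) (harmonic (m * q) (- (m * p)) m x).
Proof.
have dcos : is_derive x 1 (fun s => cos (m * s)) (- sin (m * x) * m).
  by apply: is_derive1_comp; apply: is_derive_eq; rewrite scaler1.
have dsin : is_derive x 1 (fun s => sin (m * s)) (cos (m * x) * m).
  by apply: is_derive1_comp; apply: is_derive_eq; rewrite scaler1.
by apply: is_derive_eq; rewrite /harmonic /GRing.scale /=; ring.
Qed.

Lemma derivable_harmonic (p q m x : R) : derivable (harmonic p q m) x 1.
Proof. exact: (@ex_derive _ _ _ _ _ _ _ (is_derive_harmonic p q m x)). Qed.

Lemma derive1_harmonic (p q m : R) :
  (harmonic p q m)^`() = harmonic (m * q) (- (m * p)) m.
Proof.
apply/funext => x.
by rewrite derive1E (@derive_val _ _ _ _ _ _ _ (is_derive_harmonic p q m x)).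
Qed.

Lemma derive1n_harmonic n (p q m : R) : exists p' q', (harmonic p q m)^`(n) = harmonic p' q' m.
Proof.
elim: n => [|n [p' [q' IH]]]; first by exists p, q; rewrite derive1n0.
by exists (m * q'), (- (m * p')); rewrite derive1nS IH derive1_harmonic.
Qed.

Lemma continuous_harmonic (p q m : R) : continuous (harmonic p q m).
Proof.
move=> x; apply: differentiable_continuous; apply/derivable1_diffP.
exact: derivable_harmonic.
Qed.

End Harmonic.

Section ComplexExponential.
Variable R : realType.
Local Notation C := R[i].

Definition expi (y : R) : C := cos y +i* sin y.

Lemma expiD (x y : R) : expi (x + y) = expi x * expi y.
Proof. by rewrite /expi; simpc; congr (_ +i* _); rewrite ?cosD // sinD addrC. Qed.

Lemma expi0 : expi 0 = 1.
Proof. by rewrite /expi cos0 sin0. Qed.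

Lemma expiNr (y : R) : expi y * expi (- y) = 1.
Proof. by rewrite -expiD subrr expi0. Qed.

Lemma expi_neq0 (y : R) : expi y != 0.
Proof. by apply/eqP => y0; move: (expiNr y); rewrite y0 mul0r => /esym/eqP; rewrite oner_eq0. Qed.

Lemma expiN (y : R) : expi (- y) = (expi y)^-1.
Proof. by apply: (mulfI (expi_neq0 y)); rewrite expiNr divff // expi_neq0. Qed.

Lemma conj_expi (y : R) : (expi y)^* = expi (- y).
Proof. by rewrite /expi; simpc; rewrite cosN sinN. Qed.

Lemma expi_sign_pi (s : R) : s = 1 \/ s = -1 -> expi (s * pi) = -1.
Proof.
by case=> ->; apply/eqP; rewrite eq_complex /= ?mulN1r ?mul1r ?cosN ?sinN cospi sinpi ?oppr0 !eqxx.
Qed.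

Lemma Re_mul_expi (c : C) (m s : R) :
  complex.Re (c * expi (m * s)) = harmonic (complex.Re c) (- complex.Im c) m s.
Proof. by case: c => a b; rewrite /expi /harmonic; simpc; rewrite /=; ring. Qed.

Lemma Im_mul_expi (c : C) (m s : R) :
  complex.Im (c * expi (m * s)) = harmonic (complex.Im c) (complex.Re c) m s.
Proof. by case: c => a b; rewrite /expi /harmonic; simpc; rewrite /=; ring. Qed.

Lemma harmonic_derivs_mul_expi (c : C) (m t : R) :
  harmonic (m * - complex.Im c) (- (m * complex.Re c)) m t
    +i* harmonic (m * complex.Re c) (- (m * complex.Im c)) m t
  = 'i * m%:C * (c * expi (m * t)).
Proof.
case: c => a b; rewrite /harmonic /expi -complexr0; simpc.
by rewrite /=; congr (_ +i* _); ring.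
Qed.

End ComplexExponential.

Section ExpSeries.
Variable R : realType.
Local Notation C := R[i].

Lemma expr_i k : ('i : C) ^+ k =
  ((~~ odd k)%:R * (-1) ^+ k./2) +i* ((odd k)%:R * (-1) ^+ k.-1./2).
Proof.
elim: k => [|k IH]; first by rewrite expr0 /= mul1r mul0r.
rewrite exprSr IH; simpc; rewrite /= negbK; congr (_ +i* _).
case/boolP: (odd k) => ok; last by rewrite !mul0r oppr0.
have {1}-> : k = (k./2).*2.+1 by rewrite -[k in LHS]odd_double_half ok.
by rewrite !mul1r /= half_double uphalf_half ok /= exprS mulN1r.
Qed.

Lemma complex_natr n : (n%:R : C) = (n%:R : R)%:C.
Proof. by rewrite rmorph_nat. Qed.

Lemma complex_invr (x : R) : (x%:C)^-1 = (x^-1)%:C :> C.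
Proof. by rewrite fmorphV. Qed.

Let exp_term (y : R) (k : nat) : C := (k`!)%:R^-1 * ('i * y%:C) ^+ k.

Lemma Re_exp_term y k : complex.Re (exp_term y k) = cos_coeff y k.
Proof.
rewrite /exp_term exprMn expr_i -rmorphXn complex_natr complex_invr -!complexr0; simpc.
by rewrite /cos_coeff /= -exprnP; ring.
Qed.

Lemma Im_exp_term y k : complex.Im (exp_term y k) = sin_coeff y k.
Proof.
rewrite /exp_term exprMn expr_i -rmorphXn complex_natr complex_invr -!complexr0; simpc.
by rewrite /sin_coeff /=; ring.
Qed.

Lemma lim_exp_series_i (y : R) :
  limn (fun n => complex.Re (\sum_(k < n) exp_term y k)) = cos y /\
  limn (fun n => complex.Im (\sum_(k < n) exp_term y k)) = sin y.
Proof.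
split.
- have -> : (fun n => complex.Re (\sum_(k < n) exp_term y k)) = series (cos_coeff y).
    apply/funext => n; rewrite (raddf_sum (@complex.Re R)) /series /= big_mkord.
    by apply: eq_bigr => k _; exact: Re_exp_term.
  by rewrite cosE /= -cos_coeffE.
- have -> : (fun n => complex.Im (\sum_(k < n) exp_term y k)) = series (sin_coeff y).
    apply/funext => n; rewrite (raddf_sum (@complex.Im R)) /series /= big_mkord.
    by apply: eq_bigr => k _; exact: Im_exp_term.
  by rewrite sinE /pseries /= -sin_coeffE.
Qed.

End ExpSeries.

Section Matrix2.
Variable R : realType.
Local Notation C := R[i].
Local Notation M2 := 'M[C]_2.

Definition mx2 (a b c d : C) : M2 :=
  \matrix_(i < 2, j < 2) if i == ord0 then (if j == ord0 then a else b)
                          else (if j == ord0 then c else d).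

Lemma ord2_ind (P : 'I_2 -> Prop) : P ord0 -> P ord_max -> forall i, P i.
Proof. by move=> P0 P1 [[|[|//]] Hi]; [move: P0|move: P1]; congr P; apply/val_inj. Qed.

Lemma mulmx2E (A B : M2) i j :
  (A *m B) i j = A i ord0 * B ord0 j + A i ord_max * B ord_max j.
Proof.
rewrite mxE !big_ord_recl big_ord0 addr0.
by congr (_ * _ + _ * _); congr (_ _ _); apply/val_inj.
Qed.

Ltac mx2_ext := apply/matrixP; do 2!apply: ord2_ind; rewrite ?mulmx2E !mxE.

Lemma mul_mx2 a b c d a' b' c' d' : mx2 a b c d *m mx2 a' b' c' d' =
  mx2 (a * a' + b * c') (a * b' + b * d') (c * a' + d * c') (c * b' + d * d').
Proof. by mx2_ext. Qed.

Lemma add_mx2 a b c d a' b' c' d' :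
  mx2 a b c d + mx2 a' b' c' d' = mx2 (a + a') (b + b') (c + c') (d + d').
Proof. by mx2_ext. Qed.

Lemma scale_mx2 x a b c d : x *: mx2 a b c d = mx2 (x * a) (x * b) (x * c) (x * d).
Proof. by mx2_ext. Qed.

Lemma dag_mx2 a b c d : dag (mx2 a b c d) = mx2 a^* c^* b^* d^*.
Proof. by mx2_ext. Qed.

Lemma mx2_1 : 1%:M = mx2 1 0 0 1.
Proof. by mx2_ext. Qed.

Lemma mx2_0 : 0 = mx2 0 0 0 0.
Proof. by mx2_ext. Qed.

Lemma det_mx2 a b c d : \det (mx2 a b c d) = a * d - b * c.
Proof.
rewrite (expand_det_row _ ord0) !big_ord_recl big_ord0 addr0 /cofactor !det_mx11 !mxE /=.
by rewrite expr0 expr1 !mul1r mulN1r mulrN.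
Qed.

Lemma t1E : t1 R = mx2 0 2^-1 2^-1 0.
Proof. by rewrite /t1; mx2_ext; rewrite ?mulr0 ?mulr1. Qed.

Lemma t3E : t3 R = mx2 2^-1 0 0 (- 2^-1).
Proof. by rewrite /t3; mx2_ext; rewrite ?mulr0 ?mulr1 ?mulrN1. Qed.

Lemma dagM (A B : M2) : dag (A *m B) = dag B *m dag A.
Proof. by rewrite /dag map_mxM trmx_mul. Qed.

Lemma dagN (A : M2) : dag (- A) = - dag A.
Proof. by apply/matrixP => i j; rewrite !mxE rmorphN. Qed.

End Matrix2.

Section MatrixExponential.
Variable R : realType.
Local Notation C := R[i].

Lemma expm_partial_diag (z w : C) n : expm_partial (mx2 z 0 0 w) n =
  mx2 (\sum_(k < n) ((k`!)%:R^-1 * z ^+ k)) 0 0 (\sum_(k < n) ((k`!)%:R^-1 * w ^+ k)).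
Proof.
have diagX k : mx2 z 0 0 w ^+ k = mx2 (z ^+ k) 0 0 (w ^+ k).
  elim: k => [|k IH]; first by rewrite !expr0 -mx2_1.
  by rewrite exprS IH [_ * _]mul_mx2 !mulr0 !mul0r !addr0 !add0r -!exprS.
elim: n => [|n IH]; first by rewrite /expm_partial !big_ord0 mx2_0.
rewrite /expm_partial !big_ord_recr /= -/(expm_partial _ n) IH diagX.
by rewrite scale_mx2 add_mx2 !mulr0 !addr0.
Qed.

Lemma expm_diag_i (y1 y2 : R) :
  expm (mx2 ('i * y1%:C) 0 0 ('i * y2%:C)) = mx2 (expi y1) 0 0 (expi y2).
Proof.
have [c1 s1] := lim_exp_series_i y1; have [c2 s2] := lim_exp_series_i y2.
rewrite /expm (funext (expm_partial_diag _ _)).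
apply/matrixP; do 2!apply: ord2_ind; rewrite !mxE /=.
all: under eq_fun do rewrite mxE /=.
all: under [X in _ +i* limn X]eq_fun do rewrite mxE /=.
all: by rewrite ?c1 ?s1 ?c2 ?s2 ?lim_cst.
Qed.

End MatrixExponential.

Section PhaseMatrices.
Variable R : realType.
Local Notation C := R[i].
Local Notation M2 := 'M[C]_2.

Definition phase_mx (c : M2) (m : 'I_2 -> 'I_2 -> R) (s : R) : M2 :=
  \matrix_(i, j) (c i j * expi (m i j * s)).

Variables (c : M2) (m : 'I_2 -> 'I_2 -> R).

Lemma Re_phase_mx i j : (fun s => complex.Re (phase_mx c m s i j)) =
  harmonic (complex.Re (c i j)) (- complex.Im (c i j)) (m i j).
Proof. by apply/funext => s; rewrite mxE Re_mul_expi. Qed.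

Lemma Im_phase_mx i j : (fun s => complex.Im (phase_mx c m s i j)) =
  harmonic (complex.Im (c i j)) (complex.Re (c i j)) (m i j).
Proof. by apply/funext => s; rewrite mxE Im_mul_expi. Qed.

Lemma derivable_phase_mx i j n x :
  derivable (derive1n n (fun s => complex.Re (phase_mx c m s i j))) x 1 /\
  derivable (derive1n n (fun s => complex.Im (phase_mx c m s i j))) x 1.
Proof.
rewrite Re_phase_mx Im_phase_mx.
have [p [q ->]] := derive1n_harmonic n (complex.Re (c i j)) (- complex.Im (c i j)) (m i j).
have [p' [q' ->]] := derive1n_harmonic n (complex.Im (c i j)) (complex.Re (c i j)) (m i j).
by split; apply: derivable_harmonic.
Qed.

Lemma continuous_Re_phase_mx i j : continuous (fun s => complex.Re (phase_mx c m s i j)).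
Proof. by rewrite Re_phase_mx; apply: continuous_harmonic. Qed.

Lemma continuous_Im_phase_mx i j : continuous (fun s => complex.Im (phase_mx c m s i j)).
Proof. by rewrite Im_phase_mx; apply: continuous_harmonic. Qed.

Lemma mx_cont_phase_mx D x : mx_cont_within D (phase_mx c m) x.
Proof.
by move=> i j; split; apply: cvg_within_filter;
  [apply: continuous_Re_phase_mx | apply: continuous_Im_phase_mx].
Qed.

Lemma mx_deriv_phase_mx t :
  mx_deriv (phase_mx c m) t = \matrix_(i, j) ('i * (m i j)%:C * phase_mx c m t i j).
Proof.
apply/matrixP => i j; rewrite [LHS]mxE Re_phase_mx Im_phase_mx !derive1_harmonic.
by rewrite mxE [phase_mx _ _ _ _ _]mxE -harmonic_derivs_mul_expi.
Qed.

End PhaseMatrices.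

Section MatrixCalculus.
Variable R : realType.
Local Notation C := R[i].
Local Notation M2 := 'M[C]_2.

Lemma mx_deriv_near (F G : R -> M2) t :
  (\forall s \near t, F s = G s) -> mx_deriv F t = mx_deriv G t.
Proof.
move=> FG; apply/matrixP => i j; rewrite !mxE !derive1E.
by congr (_ +i* _); apply: near_eq_derive; apply: filterS FG => s ->.
Qed.

Lemma mx_cont_mul D (F G : R -> M2) x :
  mx_cont_within D F x -> mx_cont_within D G x ->
  mx_cont_within D (fun s => F s *m G s) x.
Proof.
move=> cF cG i j.
have [F1 F2] := cF i ord0; have [F3 F4] := cF i ord_max.
have [G1 G2] := cG ord0 j; have [G3 G4] := cG ord_max j.
have ReM (a b : C) :
    complex.Re (a * b) = complex.Re a * complex.Re b - complex.Im a * complex.Im b.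
  by case: a; case: b.
have ImM (a b : C) :
    complex.Im (a * b) = complex.Re a * complex.Im b + complex.Im a * complex.Re b.
  by case: a; case: b.
under eq_fun do rewrite mulmx2E raddfD /= !ReM.
under [X in _ /\ X @ _ --> _]eq_fun do rewrite mulmx2E raddfD /= !ImM.
rewrite mulmx2E raddfD /= !ReM raddfD /= !ImM.
by split; apply: cvgD; first [apply: cvgB | apply: cvgD]; apply: cvgM.
Qed.

End MatrixCalculus.

Section JumpDiscontinuity.
Variable R : realType.

Lemma cvg_within_itv_right_end (f g : R -> R) (a b : R) :
  a < b -> {for b, continuous g} -> (forall x, a < x < b -> f x = g x) ->
  f @ within `[a, b] (nbhs b) --> f b -> f b = g b.
Proof.
move=> ab gb fg fb.
have left_within : b^'- `=>` within `[a, b] (nbhs b).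
  move=> P; rewrite /within /= => bP.
  apply: filterS2 bP (nbhs_left_gt ab) => x Px ax xb.
  by apply: Px; rewrite /= in_itv /= (ltW (ax xb)) (ltW xb).
have near_fg : {near b^'-, f =1 g}.
  near=> x; apply: fg; apply/andP; split; near: x; [exact: nbhs_left_gt | exact: nbhs_left_lt].
have gf : g @ b^'- --> f b.
  exact: cvg_trans (near_eq_cvg near_fg) (cvg_trans (cvg_app f left_within) fb).
exact: cvg_unique gf (cvg_at_left_filter gb).
Unshelve. all: by end_near.
Qed.

End JumpDiscontinuity.

Section UnwindingGauge.
Variable R : realType.
Local Notation C := R[i].
Local Notation M2 := 'M[C]_2.

Definition w0 : C := 2^-1 +i* 2^-1.
Definition rotW : M2 := mx2 w0 w0 (- w0^*) w0^*.

Definition rot3 (y : R) : M2 := mx2 (expi y) 0 0 (expi (- y)).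

Ltac complex_lra := apply/eqP; rewrite eq_complex /=; apply/andP; split; apply/eqP; lra.

Lemma rotW_SU2 : is_SU2 rotW.
Proof.
split; last by rewrite det_mx2 /w0; simpc; complex_lra.
by rewrite dag_mx2 mul_mx2 mx2_1 /w0; congr mx2; simpc; complex_lra.
Qed.

Lemma rotW_t1 : rotW *m t1 R *m dag rotW = t3 R.
Proof.
rewrite t1E t3E complex_natr complex_invr dag_mx2 !mul_mx2 /w0.
by congr mx2; simpc; complex_lra.
Qed.

Lemma dag_rot3 y : dag (rot3 y) = rot3 (- y).
Proof. by rewrite /rot3 dag_mx2 !conj_expi conjc0. Qed.

Lemma rot3_SU2 y : is_SU2 (rot3 y).
Proof.
split; last by rewrite det_mx2 expiNr mulr0 subr0.
by rewrite dag_rot3 mul_mx2 opprK mx2_1 !mulr0 !mul0r !addr0 !add0r expiNr mulrC expiNr.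
Qed.

Lemma rot3_t1 y : rot3 y *m t1 R *m rot3 (2 * y) *m dag (rot3 y) = t1 R.
Proof.
have e2 : expi (2 * y) = expi y ^+ 2 by rewrite mulr2n mulrDl mul1r expiD expr2.
rewrite dag_rot3 t1E /rot3 !mul_mx2 !expiN e2 !mulr0 !mul0r !addr0 !add0r.
by congr mx2; field; apply: expi_neq0.
Qed.

Lemma rot3_sign_pi s : s = 1 \/ s = -1 -> rot3 (s * pi) = -1%:M.
Proof.
move=> s1; have s1' : - s = 1 \/ - s = -1 by case: s1 => ->; [right | left; rewrite opprK].
rewrite /rot3 -mulNr !expi_sign_pi //.
by apply/matrixP; do 2!apply: ord2_ind; rewrite !mxE //= oppr0.
Qed.

Lemma expm_t3 (c : R) : expm ((c%:C * 'i) *: t3 R) = rot3 (c / 2).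
Proof.
have half_i (x : R) : x%:C * 'i * 2^-1 = 'i * (x / 2)%:C.
  by rewrite rmorphM fmorphV rmorph_nat; ring.
by rewrite t3E scale_mx2 !mulr0 mulrN half_i -mulrN -rmorphN /rot3 -expm_diag_i.
Qed.

Definition unwind (k t : R) : M2 := rotW *m rot3 (k * t).

Lemma unwind0 k : unwind k 0 = rotW.
Proof. by rewrite /unwind mulr0 /rot3 oppr0 expi0 -mx2_1 mulmx1. Qed.

Lemma unwind_phase k : unwind k = phase_mx rotW (fun _ j => if j == ord0 then k else - k).
Proof.
apply/funext => t; rewrite /unwind /rotW /rot3 mul_mx2 !mulr0 !addr0 !add0r.
by apply/matrixP; do 2!apply: ord2_ind; rewrite !mxE //= mulNr.
Qed.

Lemma dag_unwind_phase k :
  (fun t => dag (unwind k t)) = phase_mx (dag rotW) (fun i _ => if i == ord0 then - k else k).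
Proof.
apply/funext => t; rewrite /unwind dagM dag_rot3 /rot3 /rotW dag_mx2 mul_mx2 opprK.
rewrite !mul0r !addr0 !add0r.
by apply/matrixP; do 2!apply: ord2_ind; rewrite !mxE //= ?mulNr mulrC.
Qed.

Lemma unwind_SU2 k t : is_SU2 (unwind k t).
Proof.
have [WW detW] := rotW_SU2; have [EE detE] := rot3_SU2 (k * t).
split; last by rewrite det_mulmx detW detE mulr1.
by rewrite /unwind dagM mulmxA -(mulmxA rotW) EE mulmx1 WW.
Qed.

Lemma unwind_t1 k t : unwind k t *m t1 R *m rot3 (2 * (k * t)) *m dag (unwind k t) = t3 R.
Proof. by rewrite /unwind dagM -rotW_t1 -[in RHS](rot3_t1 (k * t)) !mulmxA. Qed.

Lemma unwind_winding k v t :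
  unwind k t *m ((2 * v)%:C *: (t1 R *m rot3 (2 * (k * t)))) *m dag (unwind k t) = phi_u v.
Proof. by rewrite -(scalemxAr (2 * v)%:C) -scalemxAl !mulmxA unwind_t1. Qed.

Lemma mx_deriv_dag_unwind k t : mx_deriv (fun s => dag (unwind k s)) t =
  (- (2 * k)%:C * 'i) *: (t3 R *m dag (unwind k t)).
Proof.
rewrite dag_unwind_phase mx_deriv_phase_mx.
rewrite -[dag (unwind k t)]/((fun s => dag (unwind k s)) t) dag_unwind_phase t3E.
apply/matrixP; do 2!apply: ord2_ind; rewrite [LHS]mxE [RHS]mxE mulmx2E !mxE /=.
all: by field.
Qed.

End UnwindingGauge.

Section GaugeOmega.
Variable R : realType.
Local Notation C := R[i].
Local Notation M2 := 'M[C]_2.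
Variables (k beta : R).

Definition gauge_Omega (t : R) : M2 := if t == beta then rotW R else unwind k t.

Lemma gauge_Omega_SU2 t : is_SU2 (gauge_Omega t).
Proof. by rewrite /gauge_Omega; case: eqP => _; [apply: rotW_SU2 | apply: unwind_SU2]. Qed.

Lemma smooth_gauge_Omega : smooth_on (`[0, beta] `\ beta) gauge_Omega.
Proof.
exists (unwind k), setT; split; first exact: openT.
split=> //; split; first by move=> i j n x _; rewrite unwind_phase; apply: derivable_phase_mx.
by move=> x [_ /eqP xb]; rewrite /gauge_Omega (negbTE xb).
Qed.

Hypothesis unwind_beta : unwind k beta = - rotW R.

Lemma gauge_Omega_conj t X :
  gauge_Omega t *m X *m dag (gauge_Omega t) = unwind k t *m X *m dag (unwind k t).
Proof.
rewrite /gauge_Omega; case: eqP => [->|//].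
by rewrite unwind_beta dagN !mulNmx mulmxN opprK.
Qed.

Lemma gauge_Omega_discontinuous : 0 < beta -> ~ mx_cont_within `[0, beta] gauge_Omega beta.
Proof.
move=> beta_gt0 /(_ ord0 ord0) [cRe _].
have cont : {for beta, continuous (fun s => complex.Re (unwind k s ord0 ord0))}.
  by rewrite unwind_phase; apply: continuous_Re_phase_mx.
have agree x : 0 < x < beta ->
    complex.Re (gauge_Omega x ord0 ord0) = complex.Re (unwind k x ord0 ord0).
  by case/andP=> _ xb; rewrite /gauge_Omega lt_eqF.
have := cvg_within_itv_right_end beta_gt0 cont agree cRe.
rewrite /gauge_Omega eqxx unwind_beta /rotW !mxE /w0 /=; lra.
Qed.

Lemma gauge_Omega_periodic : beta != 0 -> gauge_Omega 0 = gauge_Omega beta.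
Proof. by move=> beta_neq0; rewrite /gauge_Omega eqxx eq_sym (negbTE beta_neq0) unwind0. Qed.

Lemma admissible_gauge_Omega : beta != 0 -> admissible beta gauge_Omega.
Proof.
move=> beta_neq0 da _ da_cont da_per; split.
  move=> x x_in.
  have -> : (fun t => gauge_Omega t *m da t *m dag (gauge_Omega t)) =
            fun t => unwind k t *m da t *m dag (unwind k t).
    by apply/funext => t; apply: gauge_Omega_conj.
  apply: mx_cont_mul; first apply: mx_cont_mul.
  - by rewrite unwind_phase; apply: mx_cont_phase_mx.
  - exact: da_cont x_in.
  - by rewrite dag_unwind_phase; apply: mx_cont_phase_mx.
by rewrite gauge_Omega_periodic // da_per.
Qed.

Lemma gauge_transform_Omega_t3 (e t : R) : e != 0 -> t < beta ->
  gauge_transform e gauge_Omega mu4 ((- (2 * k) / e)%:C *: t3 R) t = 0.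
Proof.
move=> e_neq0 t_lt.
have dOmega : mx_deriv (fun s => dag (gauge_Omega s)) t =
              mx_deriv (fun s => dag (unwind k s)) t.
  apply: mx_deriv_near; apply: filterS (lt_nbhsl t_lt) => s s_lt.
  by rewrite /gauge_Omega lt_eqF.
rewrite /gauge_transform /dmu eqxx dOmega mx_deriv_dag_unwind /gauge_Omega lt_eqF //.
rewrite -(scalemxAr ((- (2 * k) / e)%:C)) -scalemxAl -(scalemxAr (- (2 * k)%:C * 'i)).
rewrite !mulmxA scalerA -scalerDl.
have -> : 'i / e%:C * (- (2 * k)%:C * 'i) = 'i ^+ 2 * (- (2 * k)%:C / e%:C) by ring.
rewrite sqr_i mulN1r (_ : _ - _ = 0) ?scale0r //.
by rewrite rmorphM fmorphV; ring.
Qed.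

End GaugeOmega.

Section PolyakovLoops.
Variable R : realType.

Lemma polyakov_a_w (e beta s : R) : e != 0 -> beta != 0 -> s = 1 \/ s = -1 ->
  polyakov_const e beta (a_w e beta s mu4) = -1%:M.
Proof.
move=> e_neq0 beta_neq0 s_sign.
rewrite /polyakov_const /a_w eqxx scalerA.
have -> : 'i * (e * beta)%:C * (- s * (2 * pi) / (e * beta))%:C = (- s * pi * 2)%:C * 'i.
  by rewrite -mulrA -rmorphM mulrC; congr (_%:C * _); field; rewrite e_neq0 beta_neq0.
rewrite expm_t3 mulfK ?pnatr_eq0 // rot3_sign_pi //.
by case: s_sign => ->; [right | left]; rewrite ?opprK.
Qed.

Lemma polyakov_a_u (e beta : R) : polyakov_const e beta (a_u R mu4) = 1%:M.
Proof.
rewrite /polyakov_const /a_u scaler0.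
have -> : 0 = ((0 : R)%:C * 'i) *: t3 R by rewrite rmorph0 mul0r scale0r.
by rewrite expm_t3 mul0r /rot3 oppr0 expi0 mx2_1.
Qed.

End PolyakovLoops.

Theorem proposition7 (R : realType) (e beta v s : R) :
  0 < e -> 0 < beta -> 0 < v -> (s = 1 \/ s = -1) ->
  exists Om : R -> 'M[R[i]]_2,
    (forall t, 0 <= t <= beta -> is_SU2 (Om t)) /\
    Om 0 = Om beta /\
    exists t0 : R,
      0 <= t0 <= beta /\
      smooth_on (`[0, beta] `\ t0) Om /\
      ~ mx_cont_within `[0, beta] Om t0 /\
      (forall t, 0 <= t <= beta ->
         Om t *m phi_w v beta s t *m dag (Om t) = phi_u v) /\
      (forall (mu : 'I_4) (t : R), 0 < t < beta -> t <> t0 ->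
         gauge_transform e Om mu (a_w e beta s mu) t = a_u R mu) /\
      admissible beta Om /\
      polyakov_const e beta (a_w e beta s mu4) = -1%:M /\
      polyakov_const e beta (a_u R mu4) = 1%:M.
Proof.
move=> e_gt0 beta_gt0 _ s_sign.
have [e_neq0 beta_neq0] : e != 0 /\ beta != 0 by rewrite !gt_eqF.
pose k := s * pi / beta.
have unwind_beta : unwind k beta = - rotW R.
  by rewrite /unwind /k divfK // rot3_sign_pi // mulmxN mulmx1.
exists (gauge_Omega k beta); split; first by move=> t _; apply: gauge_Omega_SU2.
split; first exact: gauge_Omega_periodic.
exists beta; split; first by rewrite lexx ltW.
split; first exact: smooth_gauge_Omega.
split; first exact: gauge_Omega_discontinuous.
split.
  move=> t _; rewrite gauge_Omega_conj // /phi_w expm_t3.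
  by rewrite (_ : _ / 2 = 2 * (k * t)) ?unwind_winding // /k; field.
split.
  move=> mu t /andP[_ t_lt] _; rewrite /a_w /a_u; case: eqP => [->|/eqP mu_neq].
    rewrite (_ : _ / _ = - (2 * k) / e) ?gauge_transform_Omega_t3 // /k.
    by field; rewrite e_neq0 beta_neq0.
  by rewrite /gauge_transform /dmu (negbTE mu_neq) mulmx0 mul0mx scaler0 addr0.
split; first exact: admissible_gauge_Omega.
by split; [apply: polyakov_a_w | apply: polyakov_a_u].
Qed.
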